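(* ${\bf KB^\boxdot}$ is strongly complete with respect to the class of quasi-symmetric bimodal frames: every ${\bf KB^\boxdot}$-consistent set of $\mathcal{L}(\boxdot)$-formulas is satisfiable at some state of some quasi-symmetric bimodal model.
   Context: Fix a nonempty set $\mathbf{P}$ of propositional variables. A bimodal model is $\langle S,R_1,R_2,V\rangle$ with $S$ nonempty, $R_1,R_2\subseteq S\times S$, $V:\mathbf{P}\to\mathcal{P}(S)$. It is quasi-symmetric if for all $i,j\in\{1,2\}$ and all $s,t\in S$ such that $tR_ju$ for some $u\in S$, $sR_it$ implies $tR_is$. $\mathcal{L}(\boxdot):\ \phi::=p\mid\neg\phi\mid(\phi\wedge\phi)\mid\boxdot\phi$. Truth: $\mathcal{M},s\vDash\boxdot\phi$ iff for all $t,u$ with $sR_1t$ and $sR_2u$, ($\mathcal{M},t\vDash\phi\iff\mathcal{M},u\vDash\phi$); atoms and Booleans as usual. ${\bf K^\boxdot}$ has axioms: all instances of propositional tautologies; $\boxdot\top$; $\boxdot\phi\leftrightarrow\boxdot\neg\phi$; $\boxdot\phi\wedge\boxdot\psi\to\boxdot(\phi\wedge\psi)$; $\boxdot\phi\to\boxdot(\phi\vee\psi)\vee\boxdot(\neg\phi\vee\chi)$; rules: modus ponens and RE: from $\phi\leftrightarrow\psi$ infer $\boxdot\phi\leftrightarrow\boxdot\psi$. ${\bf KB^\boxdot}$ is ${\bf K^\boxdot}$ plus the axiom schema $\phi\to\boxdot((\boxdot\phi\wedge\boxdot(\phi\to\psi)\wedge\neg\boxdot\psi)\to\chi)$. A set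 is consistent if no finite conjunction of its members has a provable negation. *)

From Stdlib Require Import List.
Import ListNotations.

Inductive form (P : Type) : Type :=
| Var : P -> form P
| Neg : form P -> form P
| And : form P -> form P -> form P
| Bd  : form P -> form P.

Arguments Var {P} _.
Arguments Neg {P} _.
Arguments And {P} _ _.
Arguments Bd {P} _.

Section Abbrev.
Context {P : Type}.
Definition Or (a b : form P) : form P := Neg (And (Neg a) (Neg b)).
Definition Imp (a b : form P) : form P := Neg (And a (Neg b)).
Definition Iff (a b : form P) : form P := And (Imp a b) (Imp b a).
(* top is defined from a fixed propositional variable p0 (P is nonempty) *)
Definition Top (p0 : P) : form P := Neg (And (Var p0) (Neg (Var p0))).

(* Instances of propositional tautologies: true under every Boolean
   assignment to formulas respecting negation and conjunction (boxdot
   formulas and atoms are treated as propositional atoms). *)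
Definition tautology (phi : form P) : Prop :=
  forall v : form P -> bool,
    (forall a, v (Neg a) = negb (v a)) ->
    (forall a b, v (And a b) = andb (v a) (v b)) ->
    v phi = true.

Fixpoint conj_list (p0 : P) (l : list (form P)) : form P :=
  match l with
  | [] => Top p0
  | a :: l' => And a (conj_list p0 l')
  end.
End Abbrev.

Inductive KBprov {P : Type} (p0 : P) : form P -> Prop :=
| ax_taut : forall phi, tautology phi -> KBprov p0 phi
| ax_top : KBprov p0 (Bd (Top p0))
| ax_neg : forall phi, KBprov p0 (Iff (Bd phi) (Bd (Neg phi)))
| ax_and : forall phi psi,
    KBprov p0 (Imp (And (Bd phi) (Bd psi)) (Bd (And phi psi)))
| ax_split : forall phi psi chi,
    KBprov p0 (Imp (Bd phi) (Or (Bd (Or phi psi)) (Bd (Or (Neg phi) chi))))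
| ax_B : forall phi psi chi,
    KBprov p0 (Imp phi
      (Bd (Imp (And (And (Bd phi) (Bd (Imp phi psi))) (Neg (Bd psi))) chi)))
| r_mp : forall phi psi, KBprov p0 (Imp phi psi) -> KBprov p0 phi -> KBprov p0 psi
| r_RE : forall phi psi, KBprov p0 (Iff phi psi) -> KBprov p0 (Iff (Bd phi) (Bd psi)).

Definition KBconsistent {P : Type} (p0 : P) (Gamma : form P -> Prop) : Prop :=
  forall l : list (form P), (forall a, In a l -> Gamma a) ->
    ~ KBprov p0 (Neg (conj_list p0 l)).

Record model (P : Type) : Type := {
  st : Type;
  st_inh : inhabited st;
  R1 : st -> st -> Prop;
  R2 : st -> st -> Prop;
  V : P -> st -> Prop
}.

Arguments st {P} _.
Arguments R1 {P} _ _ _.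
Arguments R2 {P} _ _ _.
Arguments V {P} _ _ _.

Definition Rel {P : Type} (M : model P) (i : bool) : st M -> st M -> Prop :=
  if i then R1 M else R2 M.

Definition quasi_symmetric {P : Type} (M : model P) : Prop :=
  forall (i j : bool) (s t : st M),
    (exists u, Rel M j t u) -> Rel M i s t -> Rel M i t s.

Fixpoint sat {P : Type} (M : model P) (s : st M) (phi : form P) : Prop :=
  match phi with
  | Var p => V M p s
  | Neg a => ~ sat M s a
  | And a b => sat M s a /\ sat M s b
  | Bd a => forall t u, R1 M s t -> R2 M s u -> (sat M t a <-> sat M u a)
  end.

(* The proof is a canonical-model construction.  Worlds are the maximal
   KB^boxdot-consistent sets of formulas (every consistent set extends to one,
   by Zorn's lemma).  In a maximal set X, if [Bd c] fails we call

       core_X(c) = { f | Bd f and Bd (f \/ c) belong to X }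

   the "c-core" of X.  The axioms of K^boxdot make core_X(c) closed under
   conjunction and provable consequence, and show that for every f with
   [Bd f] not in X both core_X(c) + f and core_X(c) + ~f are consistent.
   Both modal relations of the canonical model are the same relation: s sees t
   when some [Bd c] fails in s and t contains core_s(c) for a fixed choice of
   such c.  The truth lemma then follows, the two extensions above refuting
   [Bd f] when it is not in s.  Finally axiom B (the schema
   phi -> Bd((Bd phi /\ Bd(phi -> psi) /\ ~ Bd psi) -> chi)) yields
   quasi-symmetry: if t has a successor and s sees t, then t sees s. *)

From Stdlib Require Import List Classical ClassicalEpsilon.
From mathcomp Require classical_sets.
Import ListNotations.

Lemma zorn_subsets (T : Type) (Pr : (T -> Prop) -> Prop) :
  (forall F : (T -> Prop) -> Prop, (forall A, F A -> Pr A) ->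
     (forall A B, F A -> F B -> (forall x, A x -> B x) \/ (forall x, B x -> A x)) ->
     Pr (fun x => exists2 A, F A & A x)) ->
  exists A, Pr A /\
    forall B, (forall x, A x -> B x) -> (exists x, B x /\ ~ A x) -> ~ Pr B.
Proof.
intros Hchain.
destruct (classical_sets.Zorn_bigcup (T:=T) (P:=Pr)) as [A [HA Hmax]].
- intros F HF Htot. apply Hchain; [exact HF | exact Htot].
- exists A; split; [exact HA |].
  intros B HAB [x [Bx nAx]] PB. apply (Hmax B); [| exact PB].
  split; [exact HAB |]. intros HBA. apply nAx, HBA, Bx.
Qed.

Lemma chain_finite_bound (T : Type) (Y : T -> Prop) (F : (T -> Prop) -> Prop) :
  (forall A B, F A -> F B -> (forall x, A x -> B x) \/ (forall x, B x -> A x)) ->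
  forall l, (forall a, In a l -> Y a \/ exists2 A, F A & A a) ->
  (forall a, In a l -> Y a) \/ exists A, F A /\ forall a, In a l -> Y a \/ A a.
Proof.
intros Hchain l. induction l as [|a l IH]; intros Hl.
- left; intros a [].
- destruct IH as [IH | [A [FA HA]]]; [intros; apply Hl; right; auto | |].
  + destruct (Hl a (or_introl eq_refl)) as [Ya | [A0 FA0 A0a]].
    * left; intros x [<- | Hx]; auto.
    * right; exists A0; split; auto. intros x [<- | Hx]; auto.
  + destruct (Hl a (or_introl eq_refl)) as [Ya | [A0 FA0 A0a]].
    * right; exists A; split; auto. intros x [<- | Hx]; auto.
    * destruct (Hchain A A0 FA FA0) as [Sub | Sub].
      -- right; exists A0; split; auto. intros x [<- | Hx]; auto.
         destruct (HA x Hx); auto.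
      -- right; exists A; split; auto. intros x [<- | Hx]; auto.
Qed.

Section Canonical.
Context {P : Type} (p0 : P).
Notation prv := (KBprov p0).
Notation cj := (conj_list p0).

Ltac taut := unfold tautology; intros v hN hA; unfold Iff, Imp, Or, Top in *;
  cbn [conj_list] in *; repeat (rewrite hN || rewrite hA);
  repeat match goal with |- context [v ?x] => destruct (v x) end; reflexivity.

Lemma prv_taut1 a b : prv a -> tautology (Imp a b) -> prv b.
Proof. intros Ha T. eapply r_mp; [apply ax_taut, T | exact Ha]. Qed.

Lemma prv_taut2 a b c : prv a -> prv b -> tautology (Imp a (Imp b c)) -> prv c.
Proof. intros Ha Hb T. eapply r_mp; [eapply r_mp; [apply ax_taut, T | exact Ha] | exact Hb]. Qed.

Lemma prv_taut3 a b c d :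
  prv a -> prv b -> prv c -> tautology (Imp a (Imp b (Imp c d))) -> prv d.
Proof.
intros Ha Hb Hc T. eapply r_mp; [eapply r_mp; [apply (prv_taut1 a _ Ha T) | exact Hb] | exact Hc].
Qed.

Lemma prv_conj_app l1 l2 : prv (Imp (cj (l1 ++ l2)) (And (cj l1) (cj l2))).
Proof.
induction l1 as [|a l1 IH]; simpl; [apply ax_taut; taut |].
apply (prv_taut1 _ _ IH); taut.
Qed.

Definition consistent (X : form P -> Prop) : Prop := KBconsistent p0 X.
Definition extend (X : form P -> Prop) (f : form P) : form P -> Prop :=
  fun x => X x \/ x = f.
Definition maximal (X : form P -> Prop) : Prop :=
  consistent X /\ forall f, consistent (extend X f) -> X f.

Lemma consistent_sub X Y : consistent X -> (forall x, Y x -> X x) -> consistent Y.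
Proof. intros HX Sub l Hl; apply HX; intros; apply Sub, Hl; auto. Qed.

Lemma extend_conj X f l : (forall a, In a l -> extend X f a) ->
  exists l', (forall a, In a l' -> X a) /\ prv (Imp (And (cj l') f) (cj l)).
Proof.
induction l as [|a l IH]; intros Hl.
- exists []. split; [intros a [] | apply ax_taut; taut].
- destruct IH as [l' [H1 H2]]; [intros x Hx; apply Hl; right; exact Hx |].
  destruct (Hl a (or_introl eq_refl)) as [Xa | ->].
  + exists (a :: l'). split; [intros x [<- | Hx]; auto |].
    apply (prv_taut1 _ _ H2); taut.
  + exists l'. split; auto. apply (prv_taut1 _ _ H2); taut.
Qed.

Lemma inconsistent_extend X f : ~ consistent (extend X f) ->
  exists l, (forall a, In a l -> X a) /\ prv (Neg (And (cj l) f)).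
Proof.
intros H. apply not_all_ex_not in H as [l H].
apply imply_to_and in H as [Hl Hp]. apply NNPP in Hp.
destruct (extend_conj X f l Hl) as [l' [H1 H2]]. exists l'; split; auto.
apply (prv_taut2 _ _ _ H2 Hp). taut.
Qed.

Lemma lindenbaum Y : consistent Y -> exists X, maximal X /\ forall x, Y x -> X x.
Proof.
intros HY.
destruct (zorn_subsets (form P) (fun A => consistent (fun x => Y x \/ A x)))
  as [A [HA Hmax]].
- intros F HF Hchain l Hl.
  destruct (chain_finite_bound _ Y F Hchain l Hl) as [H | [A [FA H]]].
  + apply HY; auto.
  + apply (HF A FA l H).
- exists (fun x => Y x \/ A x). split; [split |]; [exact HA | | intros; left; auto].
  intros f Hf. destruct (classic (A f)) as [Af | nAf]; [right; exact Af |].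
  exfalso. apply (Hmax (fun x => A x \/ x = f)).
  + intros; left; auto.
  + exists f; split; auto.
  + apply (consistent_sub _ _ Hf). intros x [Yx | [Ax | ->]]; unfold extend; auto.
Qed.

Section MaximalSet.
Variable X : form P -> Prop.
Hypothesis HX : maximal X.

Lemma max_not_inconsistent f : ~ X f -> ~ consistent (extend X f).
Proof. intros H C; apply H, (proj2 HX), C. Qed.

Lemma max_not f : X f -> X (Neg f) -> False.
Proof.
intros H1 H2. apply ((proj1 HX) [f; Neg f]).
- intros x [<- | [<- | []]]; auto.
- apply ax_taut; taut.
Qed.

Lemma max_prv f : prv f -> X f.
Proof.
intros Hf. destruct (classic (X f)) as [| H]; auto. exfalso.
destruct (inconsistent_extend _ _ (max_not_inconsistent _ H)) as [l [Hl Hp]].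
apply ((proj1 HX) l Hl). apply (prv_taut2 _ _ _ Hf Hp). taut.
Qed.

Lemma max_mp a b : X (Imp a b) -> X a -> X b.
Proof.
intros Hab Ha. destruct (classic (X b)) as [| H]; auto. exfalso.
destruct (inconsistent_extend _ _ (max_not_inconsistent _ H)) as [l [Hl Hp]].
apply ((proj1 HX) (Imp a b :: a :: l)).
- intros x [<- | [<- | Hx]]; auto.
- apply (prv_taut1 _ _ Hp). taut.
Qed.

Lemma max_excluded_middle f : X f \/ X (Neg f).
Proof.
destruct (classic (X f)) as [| H1]; auto.
destruct (classic (X (Neg f))) as [| H2]; auto. exfalso.
destruct (inconsistent_extend _ _ (max_not_inconsistent _ H1)) as [l1 [Hl1 Hp1]].
destruct (inconsistent_extend _ _ (max_not_inconsistent _ H2)) as [l2 [Hl2 Hp2]].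
apply ((proj1 HX) (l1 ++ l2)).
- intros x Hx; apply in_app_or in Hx as [Hx | Hx]; auto.
- apply (prv_taut3 _ _ _ _ Hp1 Hp2 (prv_conj_app l1 l2)). taut.
Qed.

Lemma max_prv1 a b : X a -> prv (Imp a b) -> X b.
Proof. intros Ha H. exact (max_mp _ _ (max_prv _ H) Ha). Qed.

Lemma max_taut1 a b : X a -> tautology (Imp a b) -> X b.
Proof. intros Ha H. exact (max_prv1 _ _ Ha (ax_taut _ _ H)). Qed.

Lemma max_taut2 a b c : X a -> X b -> tautology (Imp a (Imp b c)) -> X c.
Proof. intros Ha Hb H. exact (max_mp _ _ (max_taut1 _ _ Ha H) Hb). Qed.

Lemma max_neg f : X (Neg f) <-> ~ X f.
Proof.
split; [intros H1 H2; exact (max_not _ H2 H1) |].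
intros H; destruct (max_excluded_middle f); tauto.
Qed.

Lemma max_and a b : X (And a b) <-> X a /\ X b.
Proof.
split; [intros H; split; apply (max_taut1 _ _ H); taut |].
intros [Ha Hb]; apply (max_taut2 _ _ _ Ha Hb); taut.
Qed.

Lemma max_or a b : X (Or a b) -> X a \/ X b.
Proof.
intros H. destruct (max_excluded_middle a) as [| Ha]; auto. right.
apply (max_taut2 _ _ _ H Ha); taut.
Qed.

Lemma bd_prv_equiv a b : prv (Iff a b) -> X (Bd a) -> X (Bd b).
Proof. intros H Ha. apply (max_prv1 _ _ Ha). apply (prv_taut1 _ _ (r_RE _ _ _ H)); taut. Qed.

Lemma bd_taut_equiv a b : tautology (Iff a b) -> X (Bd a) -> X (Bd b).
Proof. intros H; apply bd_prv_equiv, ax_taut, H. Qed.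

Lemma bd_top : X (Bd (Top p0)).
Proof. apply max_prv, ax_top. Qed.

Lemma bd_neg a : X (Bd a) <-> X (Bd (Neg a)).
Proof. split; intros H; apply (max_taut2 _ _ _ (max_prv _ (ax_neg _ a)) H); taut. Qed.

Lemma bd_and a b : X (Bd a) -> X (Bd b) -> X (Bd (And a b)).
Proof. intros Ha Hb. apply (max_mp _ _ (max_prv _ (ax_and _ a b))), max_and; auto. Qed.

Lemma bd_split a b c : X (Bd a) -> X (Bd (Or a b)) \/ X (Bd (Or (Neg a) c)).
Proof. intros H. apply max_or, (max_mp _ _ (max_prv _ (ax_split _ a b c)) H). Qed.

Lemma bd_resolve a c : X (Bd (Or a c)) -> X (Bd (Or (Neg a) c)) -> X (Bd c).
Proof.
intros H1 H2. apply (bd_taut_equiv (And (Or a c) (Or (Neg a) c)) c); [taut |].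
apply bd_and; auto.
Qed.

(* The c-core of X: the formulas that every successor selected by c must
   contain. *)
Definition core (c f : form P) : Prop := X (Bd f) /\ X (Bd (Or f c)).

(* When Bd c fails, the c-core is closed under provable consequence: the
   split axiom can only take its "wrong" branch at the cost of Bd c. *)
Lemma core_mono c a b : ~ X (Bd c) -> core c a -> prv (Imp a b) -> core c b.
Proof.
intros Hc [H1 H2] H. split.
- destruct (bd_split a b c H1) as [H3 | H3].
  + apply (bd_prv_equiv (Or a b)); [apply (prv_taut1 _ _ H); taut | exact H3].
  + exfalso; apply Hc, (bd_resolve a); auto.
- destruct (bd_split (Or a c) b c H2) as [H3 | H3].
  + apply (bd_prv_equiv (Or (Or a c) b)); [apply (prv_taut1 _ _ H); taut | exact H3].
  + exfalso; apply Hc, (bd_resolve a); auto.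
    apply (bd_taut_equiv (Or (Neg (Or a c)) c)); [taut | exact H3].
Qed.

Lemma core_and c a b : core c a -> core c b -> core c (And a b).
Proof.
intros [H1 H2] [H3 H4]. split; [apply bd_and; auto |].
apply (bd_taut_equiv (And (Or a c) (Or b c))); [taut | apply bd_and; auto].
Qed.

Lemma core_top c : core c (Top p0).
Proof. split; [apply bd_top | apply (bd_taut_equiv (Top p0)); [taut | apply bd_top]]. Qed.

Lemma core_conj c l : (forall a, In a l -> core c a) -> core c (cj l).
Proof.
induction l as [|a l IH]; intros H; simpl; [apply core_top |].
apply core_and; [apply H; left; auto | apply IH; intros; apply H; right; auto].
Qed.

Lemma core_extend_consistent c g :
  ~ X (Bd c) -> ~ X (Bd (Neg g)) -> consistent (extend (core c) g).
Proof.
intros Hc Hg l Hl Hp.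
destruct (extend_conj _ _ l Hl) as [l' [H1 H2]].
assert (Refute : prv (Imp (cj l') (Neg g))) by (apply (prv_taut2 _ _ _ H2 Hp); taut).
exact (Hg (proj1 (core_mono c _ _ Hc (core_conj c l' H1) Refute))).
Qed.

End MaximalSet.

Definition world : Type := {X : form P -> Prop | maximal X}.

(* A formula c with Bd c not in s, whenever one exists. *)
Definition witness (s : world) : form P :=
  epsilon (inhabits (Var p0)) (fun c => ~ proj1_sig s (Bd c)).

Lemma witness_spec s : (exists c, ~ proj1_sig s (Bd c)) -> ~ proj1_sig s (Bd (witness s)).
Proof. intros H. exact (epsilon_spec (inhabits (Var p0)) _ H). Qed.

Definition canon_rel (s t : world) : Prop :=
  ~ proj1_sig s (Bd (witness s)) /\
  forall f, core (proj1_sig s) (witness s) f -> proj1_sig t f.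

Definition canonical_model (w : world) : model P :=
  {| st := world; st_inh := inhabits w; R1 := canon_rel; R2 := canon_rel;
     V := fun p s => proj1_sig s (Var p) |}.

Lemma lindenbaum_world Y : consistent Y -> exists w : world, forall x, Y x -> proj1_sig w x.
Proof. intros H. destruct (lindenbaum Y H) as [X [HX Sub]]. exists (exist _ X HX); auto. Qed.

Lemma canon_succ_iff (s t : world) f : proj1_sig s (Bd f) -> canon_rel s t ->
  (proj1_sig t f <-> proj1_sig s (Bd (Or f (witness s)))).
Proof.
intros Hs [Hc Hcore]. pose proof (proj2_sig s) as HS. pose proof (proj2_sig t) as HT.
split; [| intros H; apply Hcore; split; auto].
intros Tf. destruct (bd_split _ HS f (witness s) (witness s) Hs) as [H | H]; auto.
exfalso. apply (max_not _ HT f Tf), Hcore.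
split; [exact (proj1 (bd_neg _ HS f) Hs) | exact H].
Qed.

Lemma canon_refute_bd (s : world) f : ~ proj1_sig s (Bd f) ->
  exists t u, canon_rel s t /\ canon_rel s u /\ proj1_sig t f /\ ~ proj1_sig u f.
Proof.
intros nB. pose proof (proj2_sig s) as HS.
assert (Hc : ~ proj1_sig s (Bd (witness s))) by (apply witness_spec; eauto).
assert (Hf : ~ proj1_sig s (Bd (Neg f))) by (rewrite <- (bd_neg _ HS); exact nB).
assert (Hnf : ~ proj1_sig s (Bd (Neg (Neg f)))) by (rewrite <- (bd_neg _ HS); exact Hf).
destruct (lindenbaum_world _ (core_extend_consistent _ HS _ f Hc Hf)) as [t Ht].
destruct (lindenbaum_world _ (core_extend_consistent _ HS _ (Neg f) Hc Hnf)) as [u Hu].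
exists t, u. split; [| split; [| split]].
- split; [exact Hc | intros g Hg; apply Ht; left; exact Hg].
- split; [exact Hc | intros g Hg; apply Hu; left; exact Hg].
- apply Ht; right; reflexivity.
- apply (max_neg _ (proj2_sig u)), Hu; right; reflexivity.
Qed.

Lemma truth_lemma (w0 : world) f :
  forall s : st (canonical_model w0), sat (canonical_model w0) s f <-> proj1_sig s f.
Proof.
induction f as [p | f IH | f IH g IHg | f IH]; intros s; simpl.
- reflexivity.
- rewrite IH. symmetry. apply (max_neg _ (proj2_sig s)).
- rewrite IH, IHg. symmetry. apply (max_and _ (proj2_sig s)).
- split.
  + intros H. destruct (classic (proj1_sig s (Bd f))) as [| nB]; auto. exfalso.
    destruct (canon_refute_bd s f nB) as [t [u [Rt [Ru [Tf nUf]]]]].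
    apply nUf, IH, (H t u Rt Ru), IH, Tf.
  + intros Hs t u Rt Ru. rewrite IH, IH.
    rewrite (canon_succ_iff s t f Hs Rt), (canon_succ_iff s u f Hs Ru). reflexivity.
Qed.

(* Let c_s, c_t be the witnesses of s and t.
   If some g in the c_t-core of t had ~g in s, axiom B for phi := ~g,
   psi := c_t puts both A -> c_s and A -> ~c_s into the c_s-core of s, where
   A := Bd ~g /\ Bd (~g -> c_t) /\ ~ Bd c_t; so they lie in t, but A holds
   in t, a contradiction. *)
Lemma canon_rel_symmetric (s t u : world) : canon_rel t u -> canon_rel s t -> canon_rel t s.
Proof.
intros [Htc _] [Hsc Hst]. split; auto. intros g Hg.
pose proof (proj2_sig s) as HS. pose proof (proj2_sig t) as HT.
destruct (classic (proj1_sig s g)) as [| nS]; auto. exfalso.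
apply (max_neg _ HS) in nS.
set (ct := witness t) in *. set (cs := witness s) in *.
set (A := And (And (Bd (Neg g)) (Bd (Imp (Neg g) ct))) (Neg (Bd ct))).
assert (B1 : proj1_sig s (Bd (Imp A cs)))
  by exact (max_mp _ HS _ _ (max_prv _ HS _ (ax_B _ (Neg g) ct cs)) nS).
assert (B2 : proj1_sig s (Bd (Imp A (Neg cs))))
  by exact (max_mp _ HS _ _ (max_prv _ HS _ (ax_B _ (Neg g) ct (Neg cs))) nS).
assert (T1 : proj1_sig t (Imp A cs)).
{ apply Hst. split; auto. apply (bd_taut_equiv _ HS (Imp A cs)); [taut | exact B1]. }
assert (T2 : proj1_sig t (Imp A (Neg cs))).
{ apply Hst. split; auto. apply (bd_taut_equiv _ HS (Top p0)); [taut | apply bd_top; auto]. }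
assert (TA : proj1_sig t A).
{ destruct Hg as [G1 G2]. apply (max_and _ HT). split; [apply (max_and _ HT); split |].
  - exact (proj1 (bd_neg _ HT g) G1).
  - exact G2.
  - apply (max_neg _ HT). exact Htc. }
apply (max_not _ HT cs); [exact (max_mp _ HT _ _ T1 TA) | exact (max_mp _ HT _ _ T2 TA)].
Qed.

Lemma canonical_quasi_symmetric (w : world) : quasi_symmetric (canonical_model w).
Proof.
intros i j s t [u Hu] Hst.
destruct i, j; simpl in *; eapply canon_rel_symmetric; eauto.
Qed.

End Canonical.

Theorem mainTheorem14 (P : Type) (p0 : P) (Gamma : form P -> Prop) :
  KBconsistent p0 Gamma ->
  exists (M : model P) (s : st M),
    quasi_symmetric M /\ forall phi, Gamma phi -> sat M s phi.
Proof.
intros HG. destruct (lindenbaum_world p0 Gamma HG) as [w Hw].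
exists (canonical_model p0 w), w. split.
- apply canonical_quasi_symmetric.
- intros phi Hphi. apply truth_lemma, Hw, Hphi.
Qed.
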